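(* Let $\langle X,\tau\rangle$ be a topological space. (a) If $Y\subseteq X$ and the subspace $\langle Y,\tau\restriction Y\rangle$ has a Noetherian base, then $Y$ has a Noetherian outer base in $X$. (b) Every point $p\in X$ has a Noetherian neighbourhood base (i.e. a family of open sets containing $p$, forming a neighbourhood base at $p$, with no infinite strictly $\subseteq$-increasing sequence). (c) If $Y,Z\subseteq X$ both have Noetherian outer bases in $X$, then $Y\cup Z$ also has a Noetherian outer base in $X$.
   Context: A family $\mathcal G$ of sets is Noetherian if $\langle\mathcal G,\subseteq\rangle$ contains no infinite strictly increasing sequence; a Noetherian base is a base which is Noetherian. For $Y\subseteq X$, a family $\mathcal B\subseteq\tau$ is an outer base of $Y$ in $X$ if for every $p\in Y$ the family $\{G\in\mathcal B: p\in G\}$ is a neighbourhood base of $p$ in $X$. A Noetherian outer base is an outer base which is Noetherian. *)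

From HB Require Import structures.
From mathcomp Require Import all_boot all_order.
From mathcomp Require Import boolp classical_sets topology.
Set Implicit Arguments. Unset Strict Implicit. Unset Printing Implicit Defensive.
Local Open Scope classical_set_scope.

Definition noetherian {T : Type} (G : set (set T)) : Prop :=
  ~ exists f : nat -> set T, (forall n, G (f n)) /\ (forall n, f n `<` f n.+1).

Definition rel_open {X : topologicalType} (Y : set X) (V : set X) : Prop :=
  exists U : set X, open U /\ V = U `&` Y.

Definition subspace_base {X : topologicalType} (Y : set X) (B : set (set X)) : Prop :=
  (forall G, B G -> rel_open Y G) /\
  (forall V, rel_open Y V -> V = \bigcup_(G in [set G | B G /\ G `<=` V]) G).

Definition nbhd_base {X : topologicalType} (p : X) (B : set (set X)) : Prop :=
  (forall G, B G -> open G /\ G p) /\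
  (forall U, nbhs p U -> exists2 G, B G & G `<=` U).

Definition outer_base {X : topologicalType} (Y : set X) (B : set (set X)) : Prop :=
  (forall G, B G -> open G) /\
  (forall p, Y p -> nbhd_base p [set G | B G /\ G p]).

From HB Require Import structures.
From mathcomp Require Import all_boot all_order.
From mathcomp Require Import boolp classical_sets topology.
Local Open Scope classical_set_scope.

(* Every family F of sets has a Noetherian coinitial subfamily: by Zorn's
   lemma take a Noetherian subfamily of F maximal for end extension; a member
   of F containing none of its members could still be added at the end.
   Applied to the open neighbourhoods of a point this gives (b).  For (a),
   choose for every basic set G of the subspace such a subfamily of the open
   sets W with W `&` Y = G; along an increasing sequence in the union of these
   subfamilies the traces on Y increase in the Noetherian base, hence are
   eventually constant, and from then on the sequence stays in one Noetherian
   subfamily.  Part (c) holds because Noetherian families are closed under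
   binary unions. *)

Section Noetherian.
Context {T : Type}.
Implicit Types (A B : set T) (F G : set (set T)).

Lemma proper_trans A B C : A `<` B -> B `<` C -> A `<` C.
Proof.
move=> [AB BA] [BC CB]; split; first exact: subset_trans BC.
by move=> CA; apply: CB; apply: subset_trans CA AB.
Qed.

Lemma increasing_proper (f : nat -> set T) :
  (forall n, f n `<` f n.+1) -> {homo f : n m / (n < m)%N >-> n `<` m}.
Proof. by apply: homo_ltn => B A C; apply: proper_trans. Qed.

Lemma noetherianS F G : F `<=` G -> noetherian G -> noetherian F.
Proof.
by move=> FG nG [f [Ff fS]]; apply: nG; exists f; split=> // n; apply: FG.
Qed.

Lemma noetherian_set1 A : noetherian [set A].
Proof.
by move=> [f [fA /(_ 0%N)]]; rewrite (fA 0%N) (fA 1%N); apply: properxx.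
Qed.

Lemma noetherianU F G : noetherian F -> noetherian G -> noetherian (F `|` G).
Proof.
move=> nF nG [f [fFG fS]].
have [freqF|/existsNP[N /forallNP notF]] :=
  pselect (forall N, exists n, (N <= n)%N /\ F (f n)).
  have /choice[h hF] := freqF.
  pose s k := iter k (h \o S) (h 0%N).
  apply: nF; exists (f \o s); split=> [[|k]|k] /=; first exact: (hF 0%N).2.
    exact: (hF _).2.
  by apply: increasing_proper => //; have [] := hF (s k).+1.
apply: nG; exists (fun n => f (N + n)); split=> [n|n]; last by rewrite addnS.
have [Ff|//] := fFG (N + n).
by case: (notF (N + n)); rewrite leq_addr.
Qed.

Lemma noetherian_stationary G (t : nat -> set T) : noetherian G ->
  (forall n, G (t n)) -> (forall n, t n `<=` t n.+1) ->
  exists N, forall n, (N <= n)%N -> t n = t N.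
Proof.
move=> nG Gt tS; have t_homo : {homo t : n m / (n <= m)%N >-> n `<=` m}.
  apply: homo_leq => // [A|B A C AB BC]; first exact: subset_refl.
  exact: subset_trans BC.
apply: contrapT => /forallNP grows.
have {}grows N : exists n, t N `<` t n.
  have /existsNP[n /not_implyP[Nn tnN]] := grows N.
  have tNn := t_homo _ _ Nn.
  by exists n; split=> // tnN'; apply: tnN; apply/seteqP.
have /choice[h th] := grows.
by apply: nG; exists (fun k => t (iter k h 0%N)); split.
Qed.

End Noetherian.

Lemma noetherian_fibres {T U : Type} (phi : set T -> set U) (B : set (set U))
    (G : set (set T)) :
  {homo phi : A A' / A `<=` A'} -> noetherian B ->
  (forall W, G W -> B (phi W)) ->
  (forall V, noetherian [set W | G W /\ phi W = V]) -> noetherian G.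
Proof.
move=> phiS nB GB nfibre [f [Gf fS]].
have [N fN] := @noetherian_stationary _ B (phi \o f) nB (fun n => GB _ (Gf n))
  (fun n => phiS _ _ (properW (fS n))).
apply: (nfibre (phi (f N))); exists (fun n => f (N + n)).
split=> [n|n]; last by rewrite addnS.
by split; [exact: Gf | apply: fN; rewrite leq_addr].
Qed.

Section NoetherianCoinitial.
Context {T : Type}.

(* [C'] adds to [C] only sets strictly containing no member of [C], so an
   increasing sequence that starts in [C] never leaves [C]. *)
Definition end_extension (C C' : set (set T)) :=
  C `<=` C' /\ forall V W, C V -> C' W -> ~ C W -> ~ V `<` W.

Lemma end_extension_refl C : end_extension C C.
Proof. by split=> // V W _ CW /(_ CW). Qed.

Lemma end_extension_trans C1 C2 C3 :
  end_extension C1 C2 -> end_extension C2 C3 -> end_extension C1 C3.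
Proof.
move=> [C12 new12] [C23 new23]; split; first exact: subset_trans C23.
move=> V W C1V C3W nC1W; have [C2W|nC2W] := pselect (C2 W).
  exact: new12.
exact: new23 (C12 _ C1V) C3W nC2W.
Qed.

Lemma end_extension_bigcup (K : set (set (set T))) C :
  total_on K end_extension -> K C -> end_extension C (\bigcup_(D in K) D).
Proof.
move=> Ktot KC; split; first exact: bigcup_sup.
move=> V W CV [D KD DW] nCW.
have [[CD newD]|[DC _]] := Ktot _ _ KC KD; first exact: newD.
by have := DC _ DW.
Qed.

Lemma noetherian_bigcup_chain (K : set (set (set T))) :
  total_on K end_extension -> (forall C, K C -> noetherian C) ->
  noetherian (\bigcup_(C in K) C).
Proof.
move=> Ktot nK [f [Kf fS]]; have [C KC Cf0] := Kf 0%N.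
have [_ newC] := end_extension_bigcup _ _ Ktot KC.
apply: (nK C KC); exists f; split=> // -[//|n].
apply: contrapT => nCfn; apply: (newC _ _ Cf0 (Kf n.+1) nCfn).
exact: increasing_proper.
Qed.

Lemma end_extension_setU1 C U :
  (forall V, C V -> ~ V `<=` U) -> end_extension C (C `|` [set U]).
Proof.
by move=> CU; split=> [V CV|V W CV [//|->] _ /properW]; [left|apply: CU].
Qed.

Lemma noetherian_coinitial (F : set (set T)) : exists C,
  [/\ C `<=` F, noetherian C & forall U, F U -> exists2 W, C W & W `<=` U].
Proof.
pose good C := C `<=` F /\ noetherian C.
pose R (C C' : {C | good C}) := `[< end_extension (sval C) (sval C') >].
have good0 : good set0 by split=> // -[f [/(_ 0%N)]].
have [| | |M maxM] := @ZL_preorder _ (exist _ set0 good0) R.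
- by move=> C; apply/asboolP; apply: end_extension_refl.
- move=> C1 C2 C3 /asboolP C12 /asboolP C23.
  by apply/asboolP; apply: end_extension_trans C23.
- move=> A Atot; pose K := [set sval C | C in A].
  have Ktot : total_on K end_extension.
    move=> _ _ [C AC <-] [D AD <-].
    by have [/asboolP|/asboolP] := Atot _ _ AC AD; [left|right].
  have goodK : good (\bigcup_(C in K) C).
    split; first by move=> W [_ [C _ <-] CW]; apply: (proj2_sig C).1.
    by apply: noetherian_bigcup_chain => // _ [C _ <-]; apply: (proj2_sig C).2.
  exists (exist _ _ goodK) => C AC.
  by apply/asboolP/end_extension_bigcup => //; exists C.
case: M maxM => M [MF nM] maxM; exists M; split=> // U FU.
apply: contrapT => noW; have MU V : M V -> ~ V `<=` U.
  by move=> MV VU; apply: noW; exists V.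
have goodMU : good (M `|` [set U]).
  split; first by move=> W [/MF//|->].
  exact: noetherianU nM (noetherian_set1 U).
have /asboolP[/(_ U (or_intror erefl)) MU' _] :=
  maxM (exist _ _ goodMU) (asboolT (end_extension_setU1 _ _ MU)).
exact: MU MU' (@subset_refl _ U).
Qed.

End NoetherianCoinitial.

Section OuterBases.
Context {X : topologicalType}.

Lemma noetherian_nbhd_base (p : X) : exists B, nbhd_base p B /\ noetherian B.
Proof.
have [C [CF nC Ccoinit]] :=
  noetherian_coinitial [set W : set X | open W /\ W p].
exists C; split=> //; split=> [W /CF//|U pU].
have U_p : U° p by apply: nbhs_singleton; apply: nbhs_interior.
have [W CW WU] := Ccoinit U° (conj (@open_interior _ U) U_p).
by exists W => //; apply: subset_trans WU (@interior_subset _ U).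
Qed.

Lemma outer_baseU (Y Z : set X) B1 B2 :
  outer_base Y B1 -> outer_base Z B2 -> outer_base (Y `|` Z) (B1 `|` B2).
Proof.
move=> [oB1 nB1] [oB2 nB2]; split=> [G [/oB1|/oB2]//|p Yp]; split.
- by move=> G [[/oB1|/oB2] Gp].
- move=> U pU; case: Yp => [/nB1|/nB2] [_ /(_ U pU) [G [BG Gp] GU]].
  + by exists G => //; split=> //; left.
  + by exists G => //; split=> //; right.
Qed.

Lemma noetherian_outer_base_of_subspace (Y : set X) B :
  subspace_base Y B -> noetherian B -> exists C, outer_base Y C /\ noetherian C.
Proof.
move=> [Brel Bcover] nB.
have /choice[C coinitC] := fun G : set X =>
  noetherian_coinitial [set W : set X | open W /\ W `&` Y = G].
have C_trace G W : C G W -> open W /\ W `&` Y = G.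
  by have [CF _ _] := coinitC G; apply: CF.
pose D := [set W | B (W `&` Y) /\ C (W `&` Y) W].
have Dopen W : D W -> open W by move=> [_ /C_trace[]].
exists D; split; last first.
  apply: (@noetherian_fibres _ _ (fun W => W `&` Y) B) => [W W'|//|W []//|G].
    exact: setSI.
  have [_ nCG _] := coinitC G; apply: noetherianS nCG.
  by move=> W [[_ CW] <-].
split=> // p Yp; split=> [W [/Dopen]//|U pU].
have [G [BG GU] Gp] : (\bigcup_(G in [set G | B G /\ G `<=` U° `&` Y]) G) p.
  rewrite -Bcover; last by exists U°; split=> //; apply: open_interior.
  by split=> //; apply: nbhs_singleton; apply: nbhs_interior.
have [O [oO GOY]] := Brel G BG; have [_ _ Ccoinit] := coinitC G.
have [W CW WUO] : exists2 W, C G W & W `<=` U° `&` O.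
  apply: Ccoinit; split; first by apply: openI => //; apply: open_interior.
  by rewrite -setIA -GOY setIidr // => x /GU[].
have [_ WYG] := C_trace _ _ CW.
exists W; first by split; [rewrite /D /= WYG | move: Gp; rewrite -WYG => -[]].
by move=> x /WUO[/interior_subset].
Qed.

End OuterBases.

Theorem lemma4 (X : topologicalType) :
  (forall Y : set X,
      (exists B : set (set X), subspace_base Y B /\ noetherian B) ->
      exists B : set (set X), outer_base Y B /\ noetherian B) /\
  (forall p : X, exists B : set (set X), nbhd_base p B /\ noetherian B) /\
  (forall Y Z : set X,
      (exists B : set (set X), outer_base Y B /\ noetherian B) ->
      (exists B : set (set X), outer_base Z B /\ noetherian B) ->
      exists B : set (set X), outer_base (Y `|` Z) B /\ noetherian B).
Proof.
split; [|split].
- by move=> Y [B [YB nB]]; apply: noetherian_outer_base_of_subspace YB nB.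
- exact: noetherian_nbhd_base.
- move=> Y Z [B1 [YB1 nB1]] [B2 [ZB2 nB2]]; exists (B1 `|` B2).
  by split; [apply: outer_baseU | apply: noetherianU].
Qed.
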